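(* Fix integers $L\ge 1$ and $n_0,\dots,n_L\ge 1$, and let $\boldsymbol{\mathcal W}=\mathbb{R}^{n_0\times n_1}\times\cdots\times\mathbb{R}^{n_{L-1}\times n_L}$, which has dimension $N=\sum_{l=1}^L n_{l-1}n_l$. For $\mathbf W=(W_1,\dots,W_L)\in\boldsymbol{\mathcal W}$ let $F(\mathbf W,\cdot)\colon\mathbb{R}^{n_0}\to\mathbb{R}^{n_L}$ be the network map $F(\mathbf W,\cdot)=\Lambda_L(W_L,\cdot)\circ\cdots\circ\Lambda_1(W_1,\cdot)$, where $\Lambda_l(W_l,x)=\sigma_l(W_l^\top x+b_l)$ with fixed biases $b_l\in\mathbb{R}^{n_l}$, each $\sigma_l$ applies a smooth, monotonically increasing, Lipschitz scalar function entrywise for $l<L$, and $\sigma_L=\mathrm{id}$. Let $f^*\colon\boldsymbol{\mathcal X}\to\boldsymbol{\mathcal Y}$ be a map (the task map), let $x_1,\dots,x_T\in\boldsymbol{\mathcal X}$ and $y_i=f^*(x_i)$. Let $E\colon\boldsymbol{\mathcal Y}\times\boldsymbol{\mathcal Y}\to\mathbb{R}$ be an error function such that for every $y\in\boldsymbol{\mathcal Y}$, $E(\cdot,y)$ is differentiable, $E$ has global minima, and $\phi=y$ is a global minimum of $E(\cdot,y)$ if and only if the gradient $\nabla_E(\phi)$ of $E(\cdot,y)$ vanishes at $\phi=y$. Define the empirical loss $\mathcal J(\mathbf W)=\frac1T\sum_{i=1}^T E(F(\mathbf W,x_i),y_i)$ and the matrix $\mathbf P(\mathbf W)=[\mathrm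 D_1F(\mathbf W,x_1),\dots,\mathrm D_1F(\mathbf W,x_T)]\in\mathbb{R}^{N\times Tn_L}$, where $\mathrm D_1F(\mathbf W,x_i)\in\mathbb{R}^{N\times n_L}$ is the (transposed) Jacobian of $\mathbf W\mapsto F(\mathbf W,x_i)$, i.e. its columns are the gradients with respect to all $N$ weight entries of the $n_L$ output components. Suppose $\operatorname{rank}\mathbf P(\mathbf W)=Tn_L$ for all $\mathbf W\in\boldsymbol{\mathcal W}$. Then: (1) if exact learning is achievable, i.e. there is $\mathbf W^*\in\boldsymbol{\mathcal W}$ with $F(\mathbf W^*,x_i)=f^*(x_i)$ for all $i=1,\dots,T$, then $\mathbf W^*$ is a global minimum of $\mathcal J$ and all critical points of $\mathcal J$ are global minima; (2) if exact learning is unachievable (no such $\mathbf W^*$ exists), then $\mathcal J$ has no critical point; in particular $\mathcal J$ is non-coercive.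
   Context: A critical point of $\mathcal J$ is a $\mathbf W$ with $\nabla\mathcal J(\mathbf W)=0$; by the chain rule $\nabla\mathcal J(\mathbf W)$ is proportional to $\mathbf P(\mathbf W)\boldsymbol\varepsilon(\mathbf W)$ with $\boldsymbol\varepsilon(\mathbf W)=[\nabla_E(F(\mathbf W,x_1))^\top,\dots,\nabla_E(F(\mathbf W,x_T))^\top]^\top\in\mathbb{R}^{Tn_L}$, where $\nabla_E(F(\mathbf W,x_i))$ is the gradient of $E(\cdot,y_i)$ at $F(\mathbf W,x_i)$. *)

From HB Require Import structures.
From mathcomp Require Import all_boot all_order all_algebra.
From mathcomp Require Import all_classical all_reals all_analysis.
Set Implicit Arguments. Unset Strict Implicit. Unset Printing Implicit Defensive.
Import Order.TTheory GRing.Theory Num.Theory.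
Import numFieldNormedType.Exports.
Local Open Scope ring_scope.

(* Layer k (k = 0..L-1, paper's layer l = k+1)
   has weight matrix W_{k+1} : 'M_(n k, n k.+1).
   The weight space W = R^{n0 x n1} x ... x R^{n_{L-1} x n_L} is encoded as
   the row vector space 'rV_N, N = \sum_(k<L) n k * n k.+1, by concatenating
   the vectorisations (mxvec) of the W_l; the layer matrices are recovered
   with submxrow / vec_mx. *)
Definition wdim (n : nat -> nat) (L : nat) : nat := (\sum_(k < L) n k * n k.+1)%N.

Section Network.
Variables (R : realType) (n : nat -> nat) (L : nat).

(* Weight matrix W_{k+1} of layer k (zero, and never used, when k >= L). *)
Definition layerW (w : 'rV[R]_(wdim n L)) (k : nat) : 'M[R]_(n k, n k.+1) :=
  match ltnP k L with
  | LtnNotGeq Hk => vec_mx (submxrow w (Ordinal Hk))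
  | GeqNotLtn _ => 0
  end.

Variables (sigma : nat -> R -> R) (b : forall k : nat, 'rV[R]_(n k.+1)).

Definition act (k : nat) (v : 'rV[R]_(n k.+1)) : 'rV[R]_(n k.+1) :=
  if (k.+1 < L)%N then map_mx (sigma k) v else v.

(* Row-vector convention: Lambda(W, x) = sigma(W^T x + b) is written
   sigma(x *m W + b) for x a row vector. *)
Fixpoint fwd (w : 'rV[R]_(wdim n L)) (x : 'rV[R]_(n 0)) (k : nat) : 'rV[R]_(n k) :=
  match k with
  | 0 => x
  | k'.+1 => @act k' (fwd w x k' *m @layerW w k' + b k')
  end.

Definition netF (w : 'rV[R]_(wdim n L)) (x : 'rV[R]_(n 0)) : 'rV[R]_(n L) :=
  fwd w x L.

End Network.

Definition grad (R : realType) (m : nat) (g : 'rV[R]_m -> R) (v : 'rV[R]_m)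
  : 'rV[R]_m := \row_k 'D_(delta_mx 0 k) g v.

Definition D1F (R : realType) (n : nat -> nat) (L : nat) (sigma : nat -> R -> R)
  (b : forall k : nat, 'rV[R]_(n k.+1)) (w : 'rV[R]_(wdim n L)) (x : 'rV[R]_(n 0))
  : 'M[R]_(wdim n L, n L) :=
  \matrix_(k, j) 'D_(delta_mx 0 k) (fun w' => netF sigma b w' x 0 j) w.

Definition Pmat (R : realType) (n : nat -> nat) (L : nat) (sigma : nat -> R -> R)
  (b : forall k : nat, 'rV[R]_(n k.+1)) (T : nat) (xs : 'I_T -> 'rV[R]_(n 0))
  (w : 'rV[R]_(wdim n L)) : 'M[R]_(wdim n L, \sum_(i < T) n L) :=
  mxrow (fun i : 'I_T => D1F sigma b w (xs i)).

Definition lossJ (R : realType) (n : nat -> nat) (L : nat) (sigma : nat -> R -> R)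
  (b : forall k : nat, 'rV[R]_(n k.+1)) (E : 'rV[R]_(n L) -> 'rV[R]_(n L) -> R)
  (fstar : 'rV[R]_(n 0) -> 'rV[R]_(n L)) (T : nat) (xs : 'I_T -> 'rV[R]_(n 0))
  (w : 'rV[R]_(wdim n L)) : R :=
  (T%:R)^-1 * \sum_(i < T) E (netF sigma b w (xs i)) (fstar (xs i)).

Definition smooth (R : realType) (f : R -> R) : Prop :=
  forall (k : nat) (x : R), derivable (iter k (@derive1 R R) f) x 1.

Definition global_min (R : realType) (U : Type) (J : U -> R) (u : U) : Prop :=
  forall v, J u <= J v.

Definition critical_point (R : realType) (m : nat) (J : 'rV[R]_m -> R) (v : 'rV[R]_m)
  : Prop := grad J v = 0.

Definition coercive (R : realType) (m : nat) (J : 'rV[R]_m -> R) : Prop :=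
  forall M : R, exists r : R, forall v : 'rV[R]_m, r < `|v| -> M < J v.

From HB Require Import structures.
From mathcomp Require Import all_boot all_order all_algebra.
From mathcomp Require Import all_classical all_reals all_analysis.
Import Order.TTheory GRing.Theory Num.Theory.
Import numFieldNormedType.Exports.
Local Open Scope ring_scope.

(* By the chain rule, grad J(W) = T^-1 (P(W) eps(W))^T.  As P(W) has full
   column rank, a critical point forces eps(W) = 0, i.e. every gradient of
   E(., y_i) vanishes at F(W, x_i), so that F(W, x_i) = y_i: critical points
   interpolate the data exactly, and interpolants are global minima because
   each E(., y_i) is minimal at y_i.  Without interpolants there is therefore
   no critical point; but a continuous coercive J attains its minimum on a
   large closed ball, and by Fermat's rule that minimum would be critical. *)

Section CriticalPoints.
Variables (R : realType) (m : nat).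
Implicit Types (J : 'rV[R]_m -> R) (c : 'rV[R]_m).

Lemma global_min_critical J c :
  (forall w, differentiable J w) -> global_min J c -> critical_point J c.
Proof.
move=> dJ Jmin; apply/rowP => k; rewrite !mxE.
set v : 'rV[R]_m := delta_mx 0 k.
pose g (h : R) := J (h *: v + c).
have dg t : derivable g t 1.
  apply/derivable1_diffP.
  have -> : g = J \o ((fun h : R => h *: v) + cst c) by [].
  exact: differentiable_comp.
have gmin : is_derive (0 : R) 1 g 0.
  apply: (@derive1_at_min _ _ (-1) 1) => [|t _||t _].
  - exact: le_trans (lerN10 R) ler01.
  - exact: dg.
  - by rewrite in_itv /= ltrN10 ltr01.
  - by rewrite /g scale0r add0r; exact: Jmin.
move: gmin => /(@derive_val _ _ _ _ _ _ _) <-.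
rewrite /derive /g scale0r add0r; do 2 f_equal; apply/funext => h /=.
by rewrite /shift /= addr0 -[h%:A]/(h * 1) mulr1.
Qed.

Lemma coercive_global_min J :
  continuous J -> coercive J -> exists c, global_min J c.
Proof.
move=> cJ /(_ (J 0)) [r Jbig].
pose A := closed_ball_ Num.norm (0 : 'rV[R]_m) `|r|.
have A0 : A 0 by rewrite /A /closed_ball_ /= subr0 normr0.
have Acompact : compact A.
  apply: bounded_closed_compact; last exact: closed_closed_ball_.
  exists `|r|; split; first exact: num_real.
  move=> M rM y; rewrite /A /closed_ball_ /= sub0r normrN => yA.
  exact: le_trans yA (ltW rM).
have [c _ cmin] := EVT_min_rV (ex_intro _ 0 A0) Acompact (continuous_subspaceT cJ).
exists c => v; have [vA|vA] := pselect (A v); first by apply: cmin; rewrite inE.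
apply: le_trans (cmin 0 _) (ltW (Jbig v _)); first by rewrite inE.
rewrite (le_lt_trans (ler_norm r)) // ltNge; apply: contra_notN vA.
by rewrite /A /closed_ball_ /= sub0r normrN.
Qed.

End CriticalPoints.

Lemma derive_comp_grad (R : realType) m p (F : 'rV[R]_m -> 'rV[R]_p)
    (E : 'rV[R]_p -> R) (w v : 'rV[R]_m) :
  differentiable F w -> differentiable E (F w) ->
  'D_v (E \o F) w = \sum_j 'D_v F w 0 j * grad E (F w) 0 j.
Proof.
move=> dF dE; rewrite deriveE; last exact: differentiable_comp.
rewrite diff_comp //= -[in 'd F w v]deriveE //.
rewrite {1}(row_sum_delta ('D_v F w)) linear_sum.
by apply: eq_bigr => j _; rewrite linearZ /= -deriveE // mxE.
Qed.

Section Network.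
Variables (R : realType) (n : nat -> nat) (L : nat).
Variables (sigma : nat -> R -> R) (b : forall k : nat, 'rV[R]_(n k.+1)).
Hypothesis sigma_derivable :
  forall k, (k.+1 < L)%N -> forall t, derivable (sigma k) t 1.

Lemma differentiable_layerW k i j (w0 : 'rV[R]_(wdim n L)) :
  differentiable (fun w => layerW w k i j) w0.
Proof.
rewrite /layerW; case: ltnP => kL; last first.
  under eq_fun do rewrite mxE; exact: differentiable_cst.
under eq_fun do rewrite !mxE; exact: differentiable_coord.
Qed.

Lemma differentiable_fwd x k (j : 'I_(n k)) (w0 : 'rV[R]_(wdim n L)) :
  differentiable (fun w => fwd sigma b w x k 0 j) w0.
Proof.
elim: k j w0 => [|k IHk] j w0 /=; first exact: differentiable_cst.
pose pre (w : 'rV[R]_(wdim n L)) :=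
  \sum_i (fwd sigma b w x k 0 i * layerW w k i j) + b k 0 j.
have dpre w1 : differentiable pre w1.
  have -> : pre = \sum_i (fun w => fwd sigma b w x k 0 i * layerW w k i j)
                 + cst (b k 0 j) by apply/funext => w; rewrite /pre /= fct_sumE.
  apply: differentiableD; last exact: differentiable_cst.
  apply: differentiable_sum => i; apply: differentiableM; first exact: IHk.
  exact: differentiable_layerW.
rewrite /act; case kL : (k.+1 < L)%N.
  under eq_fun do rewrite !mxE; change (differentiable (sigma k \o pre) w0).
  apply: differentiable_comp => //; exact/derivable1_diffP/sigma_derivable.
by under eq_fun do rewrite !mxE; exact: dpre.
Qed.

Lemma differentiable_netF x (w0 : 'rV[R]_(wdim n L)) :
  differentiable (netF sigma b ^~ x) w0.
Proof.
have -> : netF sigma b ^~ x =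
    \sum_j (fun w => netF sigma b w x 0 j *: (delta_mx 0 j : 'rV[R]_(n L))).
  by apply/funext => w; rewrite fct_sumE -row_sum_delta.
apply: differentiable_sum => j; apply: differentiableZl; exact: differentiable_fwd.
Qed.

Lemma D1FE x (w : 'rV[R]_(wdim n L)) k j :
  D1F sigma b w x k j = 'D_(delta_mx 0 k) (netF sigma b ^~ x) w 0 j.
Proof. by rewrite derive_mx ?mxE //; exact/diff_derivable/differentiable_netF. Qed.

Variables (E : 'rV[R]_(n L) -> 'rV[R]_(n L) -> R).
Variables (fstar : 'rV[R]_(n 0) -> 'rV[R]_(n L)).
Variables (T : nat) (xs : 'I_T -> 'rV[R]_(n 0)).
Hypothesis E_differentiable : forall y phi, differentiable (E^~ y) phi.

Local Notation J := (lossJ sigma b E fstar xs).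

(* The paper's eps(W), stacking the T gradients of E as column blocks. *)
Definition residual (w : 'rV[R]_(wdim n L)) : 'cV[R]_(\sum_(i < T) n L) :=
  \mxcol_i (grad (E^~ (fstar (xs i))) (netF sigma b w (xs i)))^T.

Lemma lossJE : J = (T%:R)^-1 *:
  \sum_i (E^~ (fstar (xs i)) \o netF sigma b ^~ (xs i)).
Proof. by apply/funext => w; rewrite /lossJ /= fct_sumE. Qed.

Lemma differentiable_lossJ w : differentiable J w.
Proof.
rewrite lossJE; apply: differentiableZ; apply: differentiable_sum => i.
apply: differentiable_comp; [exact: differentiable_netF | exact: E_differentiable].
Qed.

Lemma grad_lossJ w : grad J w = (T%:R)^-1 *: (Pmat sigma b xs w *m residual w)^T.
Proof.
apply/rowP => k; rewrite /Pmat /residual mul_mxrow_mxcol !mxE summxE lossJE.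
have dterm i : differentiable (E^~ (fstar (xs i)) \o netF sigma b ^~ (xs i)) w.
  apply: differentiable_comp; [exact: differentiable_netF | exact: E_differentiable].
rewrite deriveZ; last exact/diff_derivable/differentiable_sum.
rewrite derive_sum; last by move=> i; exact/diff_derivable.
congr (_ * _); apply: eq_bigr => i _.
rewrite derive_comp_grad ?mxE; [|exact: differentiable_netF|exact: E_differentiable].
by apply: eq_bigr => j _; rewrite D1FE !mxE.
Qed.

Lemma interpolant_global_min w :
  (forall y, global_min (E^~ y) y) ->
  (forall i, netF sigma b w (xs i) = fstar (xs i)) -> global_min J w.
Proof.
move=> Emin interp v; apply: ler_wpM2l; first by rewrite invr_ge0 ler0n.
by apply: ler_sum => i _; rewrite interp; exact: Emin.
Qed.

Lemma critical_residual_eq0 w : (0 < T)%N ->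
  \rank (Pmat sigma b xs w) = (T * n L)%N -> critical_point J w -> residual w = 0.
Proof.
move=> T_gt0 rankP; rewrite /critical_point grad_lossJ => /eqP.
have Pfree : row_free (Pmat sigma b xs w)^T.
  by rewrite /row_free mxrank_tr rankP sum_nat_const card_ord.
rewrite scaler_eq0 invr_eq0 pnatr_eq0 gtn_eqF //= trmx_mul mulmx_free_eq0 //.
by rewrite -trmx0 => /eqP/trmx_inj.
Qed.

Lemma critical_interpolant w :
  (forall y phi, grad (E^~ y) phi = 0 <-> phi = y) ->
  \rank (Pmat sigma b xs w) = (T * n L)%N -> critical_point J w ->
  forall i, netF sigma b w (xs i) = fstar (xs i).
Proof.
move=> gradE0 rankP crit i; apply/gradE0.
have res0 : residual w = 0.
  by apply: critical_residual_eq0 => //; exact: leq_ltn_trans (ltn_ord i).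
have := mxcolK (fun j => (grad (E^~ (fstar (xs j))) (netF sigma b w (xs j)))^T) i.
by rewrite -/(residual w) res0 submxcol0 => /(congr1 trmx); rewrite trmxK trmx0.
Qed.

End Network.

Theorem theorem1 (R : realType) (L : nat) (n : nat -> nat)
  (sigma : nat -> R -> R) (b : forall k : nat, 'rV[R]_(n k.+1))
  (E : 'rV[R]_(n L) -> 'rV[R]_(n L) -> R)
  (fstar : 'rV[R]_(n 0) -> 'rV[R]_(n L))
  (T : nat) (xs : 'I_T -> 'rV[R]_(n 0)) :
  (1 <= L)%N ->
  (forall l, (l <= L)%N -> (1 <= n l)%N) ->
  (forall k, (k.+1 < L)%N ->
     [/\ smooth (sigma k), {homo sigma k : x y / x <= y} & lipschitz (sigma k)]) ->
  (forall y phi, differentiable (E^~ y) phi) ->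
  (forall y, exists phi0, global_min (E^~ y) phi0) ->
  (forall y, global_min (E^~ y) y) ->
  (forall y phi, grad (E^~ y) phi = 0 <-> phi = y) ->
  (forall w : 'rV[R]_(wdim n L), \rank (Pmat sigma b xs w) = (T * n L)%N) ->
  let J := lossJ sigma b E fstar xs in
  ((exists wstar : 'rV[R]_(wdim n L), forall i, netF sigma b wstar (xs i) = fstar (xs i)) ->
     (forall wstar : 'rV[R]_(wdim n L), (forall i, netF sigma b wstar (xs i) = fstar (xs i)) ->
        global_min J wstar) /\
     (forall w : 'rV[R]_(wdim n L), critical_point J w -> global_min J w)) /\
  (~ (exists wstar : 'rV[R]_(wdim n L), forall i, netF sigma b wstar (xs i) = fstar (xs i)) ->
     (forall w : 'rV[R]_(wdim n L), ~ critical_point J w) /\ ~ coercive J).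
Proof.
move=> _ _ sigma_ok E_diff _ Emin gradE0 rankP J.
have sigma_der k : (k.+1 < L)%N -> forall t, derivable (sigma k) t 1.
  move=> kL t; have [smooth_sigma _ _] := sigma_ok k kL.
  exact: smooth_sigma 0%N t.
have crit_interp w : critical_point J w ->
    forall i, netF sigma b w (xs i) = fstar (xs i).
  exact: critical_interpolant.
split.
  move=> _; split=> [wstar|w /crit_interp]; exact: interpolant_global_min.
move=> no_interp; have no_crit w : ~ critical_point J w.
  by move=> /crit_interp interp; apply: no_interp; exists w.
split=> // /coercive_global_min [|c cmin].
  by move=> w; apply/differentiable_continuous/differentiable_lossJ.
apply: (no_crit c); apply: global_min_critical cmin => w.
exact: differentiable_lossJ.
Qed.
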